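(* Let $n\ge2$, $1\le t\le n-1$, and let $a,b,c,d,e>0$. Consider the continuous-time Markov chain on the set of words $u=u_1\cdots u_n\in\{1,0,\bar1\}^n$ having exactly $t$ nonzero letters, with the following transitions: for $1\le i<n$, a factor $u_iu_{i+1}$ equal to $01$ becomes $10$ at rate $a$, a factor $\bar11$ becomes $1\bar1$ at rate $b$, a factor $\bar10$ becomes $0\bar1$ at rate $c$; if $u_n=\bar1$ it becomes $1$ at rate $d$; if $u_1=1$ it becomes $\bar1$ at rate $e$. Then the stationary distribution of this chain at a word $u$ is proportional to $[u]$ evaluated at these values of $a,b,c,d,e$. In particular (for $(a,b,c,d,e)$ proportional to $(2,2,2,1,1)$) this describes the stationary distribution $\pi_J$ of the type C chain $\Theta_J$ with $J=[n]\setminus\{t\}$, under the encoding of a state by the word with $u_j=1$ if column $j$ has a particle in the upper row, $u_j=\bar1$ if in the lower row, $u_j=0$ if column $j$ is empty.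
   Context: Words are finite sequences over $\{1,0,\bar1\}$ ($\bar1=-1$). For every word $u$, $[u]$ is the Laurent polynomial in indeterminates $a,b,c,d,e$ determined uniquely by the recursions, valid for all (possibly empty) words $v,w$: $[v01w]=[v0w]/a$, $[v\bar11w]=([v\bar1w]+[v1w])/b$, $[v\bar10w]=[v0w]/c$, $[v\bar1]=[v]/d$, $[1v]=[v]/e$, and $[u]=1$ whenever $u$ consists only of $0$'s (including the empty word). Type C chain $\Theta_J$ for $J=[n]\setminus\{t\}$: states are placements of $t$ indistinguishable particles in a $2\times n$ array (upper row, lower row), at most one per column. The dynamics, in word encoding, is exactly the chain above with rates $(a,b,c,d,e)=(2,2,2,1,1)$: an upper particle moves left into an empty column or across a lower particle in the adjacent column, a lower particle moves right, and at the ends an upper particle in column $1$ drops to the lower row and a lower particle in column $n$ rises to the upper row. *)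

From HB Require Import structures.
From mathcomp Require Import all_boot all_order all_algebra.
Set Implicit Arguments. Unset Strict Implicit. Unset Printing Implicit Defensive.
Import Order.TTheory GRing.Theory Num.Theory.
Local Open Scope ring_scope.

(* Letters of the alphabet {1, 0, bar1}, encoded in the finite type option bool. *)
Definition letter := option bool.
Definition L1 : letter := Some true.
Definition L0 : letter := None.
Definition Lbar : letter := Some false.

Section Bracket.
Variable R : fieldType.
Variables a b c d e : R.

(* f satisfies all the defining recursions of the bracket [u]
   (evaluated at the values a,b,c,d,e). *)
Definition bracket_rec (f : seq letter -> R) : Prop :=
  [/\ (forall v w : seq letter, f (v ++ L0 :: L1 :: w) = f (v ++ L0 :: w) / a),
      (forall v w : seq letter,
          f (v ++ Lbar :: L1 :: w) = (f (v ++ Lbar :: w) + f (v ++ L1 :: w)) / b),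
      (forall v w : seq letter, f (v ++ Lbar :: L0 :: w) = f (v ++ L0 :: w) / c),
      (forall v : seq letter, f (rcons v Lbar) = f v / d)
    &      (forall v : seq letter, f (L1 :: v) = f v / e) ]
  /\ (forall u : seq letter, all (pred1 L0) u -> f u = 1).

Definition swap_rate (x y : letter) : option R :=
  if (x == L0) && (y == L1) then Some a
  else if (x == Lbar) && (y == L1) then Some b
  else if (x == Lbar) && (y == L0) then Some c
  else None.

Definition moves (u : seq letter) : seq (seq letter * R) :=
  pmap (fun i =>
          let x := nth L0 u i in let y := nth L0 u i.+1 in
          omap (fun r => (set_nth L0 (set_nth L0 u i y) i.+1 x, r)) (swap_rate x y))
       (iota 0 (size u).-1)
  ++ (if (size u > 0)%N && (last L0 u == Lbar)
      then [:: (set_nth L0 u (size u).-1 L1, d)] else [::])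
  ++ (if head L0 u == L1 then [:: (set_nth L0 u 0 Lbar, e)] else [::]).

Definition rate (u v : seq letter) : R :=
  \sum_(p <- moves u | p.1 == v) p.2.

Definition out_rate (u : seq letter) : R := \sum_(p <- moves u) p.2.

Definition in_state_space (n t : nat) (u : n.-tuple letter) : bool :=
  count (fun x => x != L0) u == t.

End Bracket.

Definition stationary (R : realFieldType) (a b c d e : R) (n t : nat)
    (pi : n.-tuple letter -> R) : Prop :=
  [/\ (forall u, in_state_space t u -> 0 <= pi u),
      \sum_(u | in_state_space t u) pi u = 1
    & (forall v, in_state_space t v ->
         \sum_(u | in_state_space t u) pi u * rate a b c d e u v
         = pi v * out_rate a b c d e v)].

(* A left-to-right scan shows that the recursions are consistent.  After a
   prefix has been read, the functional w |-> [prefix w] is a polynomial in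
   X = b Y - 1, where Y^j stands for the current context (start of the word or
   a 0) followed by j letters 1bar: reading 1bar multiplies by Y, reading 0
   evaluates at Y = 1/c, the end of the word evaluates at Y = 1/d, and reading
   a 1 is the operator [scan_one], which is simple in the variable X.

   Every word that is not all 0's admits one of the recursions, so [u] > 0.
   Writing F_k = sign(u_k) [u with its k-th letter deleted], the net flow into
   u through the pair (u_i, u_(i+1)) is F_i - F_(i+1), and the two boundary
   moves contribute F_n and -F_1; hence [u] satisfies global balance.  The chain
   is irreducible on words with given length and number of nonzero letters, so
   comparing a stationary pi with [u] at a word minimising pi u / [u] shows
   that pi is proportional to [u]. *)

From HB Require Import structures.
From mathcomp Require Import all_boot all_order all_algebra.
From mathcomp Require Import ring.
Set Implicit Arguments. Unset Strict Implicit. Unset Printing Implicit Defensive.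
Import Order.TTheory GRing.Theory Num.Theory.
Local Open Scope ring_scope.

Ltac field_nz := field; by repeat (apply/andP; split).

(** * Existence of the bracket *)

Section Scan.

Variable R : fieldType.
Variables a b c d e : R.
Hypotheses (a0 : a != 0) (b0 : b != 0) (c0 : c != 0) (d0 : d != 0) (e0 : e != 0).

Definition scan_bar (p : {poly R}) : {poly R} := b^-1 *: (p + p * 'X).
Definition scan_one (k : R) (p : {poly R}) : {poly R} :=
  b^-1 *: (p + drop_poly 1 p + ((k - 1) * p`_0)%:P).
Definition scan_zero (p : {poly R}) : {poly R} := (p.[b / c - 1])%:P.

Definition scan_letter (st : {poly R} * R) (x : letter) : {poly R} * R :=
  match x with
  | Some true => (scan_one st.2 st.1, st.2)
  | Some false => (scan_bar st.1, st.2)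
  | None => (scan_zero st.1, b / a)
  end.

Definition scan (w : seq letter) (st : {poly R} * R) : R :=
  (foldl scan_letter st w).1.[b / d - 1].

Definition bracket (u : seq letter) : R := scan u (1, b / e).

Lemma scan_barZD s p q : scan_bar (s *: p + q) = s *: scan_bar p + scan_bar q.
Proof.
apply/polyP => i; rewrite /scan_bar !(coefD, coefZ, coefMX).
by case: (i == 0)%N; ring.
Qed.

Lemma scan_oneZD k s p q : scan_one k (s *: p + q) = s *: scan_one k p + scan_one k q.
Proof.
rewrite /scan_one drop_polyD drop_polyZ coefD coefZ.
by apply/polyP => i; rewrite !(coefD, coefZ, coefC); case: (i == 0)%N; ring.
Qed.

Lemma scan_zeroZD s p q : scan_zero (s *: p + q) = s *: scan_zero p + scan_zero q.
Proof. by rewrite /scan_zero hornerD hornerZ polyCD polyCM -mul_polyC. Qed.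

Lemma scanZD w k s p q : scan w (s *: p + q, k) = s * scan w (p, k) + scan w (q, k).
Proof.
elim: w k p q => [|x w IH] k p q; first by rewrite /scan /= hornerD hornerZ.
rewrite /scan /=; case: x => [[]|] /=.
- by rewrite scan_oneZD -/(scan _ _) IH.
- by rewrite scan_barZD -/(scan _ _) IH.
- by rewrite scan_zeroZD -/(scan _ _) IH.
Qed.

Lemma scanD w k p q : scan w (p + q, k) = scan w (p, k) + scan w (q, k).
Proof. by rewrite -{1}[p]scale1r scanZD mul1r. Qed.

Lemma scanZ w k s p : scan w (s *: p, k) = s * scan w (p, k).
Proof.
have scan0 : scan w (0, k) = 0.
  by apply/(addrI (scan w (0, k))); rewrite -scanD !addr0.
by rewrite -[s *: p]addr0 scanZD scan0 addr0.
Qed.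

Lemma scanC w k s : scan w (s%:P, k) = s * scan w (1, k).
Proof. by rewrite -scanZ -alg_polyC. Qed.

Lemma scan_one_bar k p : scan_one k (scan_bar p) = b^-1 *: (scan_bar p + scan_one k p).
Proof.
apply/polyP => i; rewrite /scan_one /scan_bar.
rewrite !(coefD, coefZ, coefMX, coef_drop_poly, coefC).
by case: i => [|i] /=; rewrite ?addn1 ?coefMX /=; ring.
Qed.

Lemma bracket_zeros u : all (pred1 L0) u -> bracket u = 1.
Proof.
rewrite /bracket; elim: u (b / e) => [|x u IH] k /=; first by rewrite /scan /= hornerC.
by case/andP => /eqP -> /IH; rewrite /scan /= /scan_zero hornerC.
Qed.

Lemma bracket_head1 v : bracket (L1 :: v) = bracket v / e.
Proof.
rewrite /bracket /scan /= -/(scan v _).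
suff -> : scan_one (b / e) 1 = (e^-1)%:P by rewrite scanC mulrC.
rewrite /scan_one drop_poly_eq0 ?size_poly1 // coef1 /= addr0 mulr1.
by rewrite -polyCD -mul_polyC -polyCM; congr (_%:P); field_nz.
Qed.

Lemma bracket_lastbar v : bracket (rcons v Lbar) = bracket v / d.
Proof.
rewrite /bracket /scan -cats1 foldl_cat /=.
by rewrite /scan_bar hornerZ hornerD hornerM hornerX; field_nz.
Qed.

Lemma bracket_01 v w : bracket (v ++ L0 :: L1 :: w) = bracket (v ++ L0 :: w) / a.
Proof.
rewrite /bracket /scan !foldl_cat /= -!/(scan w _).
set C := (foldl scan_letter (1, b / e) v).1.[b / c - 1].
have -> : scan_one (b / a) (scan_zero (foldl scan_letter (1, b / e) v).1) = (C / a)%:P.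
  rewrite /scan_one /scan_zero -/C drop_poly_eq0 ?size_polyC ?leq_b1 // coefC /= addr0.
  by rewrite -polyCD -mul_polyC -polyCM; congr (_%:P); field_nz.
by rewrite /scan_zero -/C scanC [in RHS]scanC mulrAC.
Qed.

Lemma bracket_bar0 v w : bracket (v ++ Lbar :: L0 :: w) = bracket (v ++ L0 :: w) / c.
Proof.
rewrite /bracket /scan !foldl_cat /= -!/(scan w _).
rewrite /scan_zero /scan_bar hornerZ hornerD hornerM hornerX scanC [in RHS]scanC.
by field_nz.
Qed.

Lemma bracket_bar1 v w :
  bracket (v ++ Lbar :: L1 :: w) = (bracket (v ++ Lbar :: w) + bracket (v ++ L1 :: w)) / b.
Proof.
rewrite /bracket /scan !foldl_cat /= -!/(scan w _).
by rewrite scan_one_bar scanZ scanD mulrC.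
Qed.

Lemma bracket_recP : bracket_rec a b c d e bracket.
Proof.
split; [split|].
- exact: bracket_01.
- exact: bracket_bar1.
- exact: bracket_bar0.
- exact: bracket_lastbar.
- exact: bracket_head1.
- exact: bracket_zeros.
Qed.

End Scan.

(** * Positivity *)

Definition redex (x y : letter) : bool :=
  [|| (x == L0) && (y == L1), (x == Lbar) && (y == L1) | (x == Lbar) && (y == L0)].

Lemma exists_redex (u : seq letter) :
  head L0 u != L1 -> last L0 u != Lbar -> ~~ all (pred1 L0) u ->
  exists p x y s, u = p ++ x :: y :: s /\ redex x y.
Proof.
elim: u => [|x w IH] //= hx hl hall.
case: w IH hl hall => [|y w] IH hl hall; first by case: x hx hl hall => [[]|].
have prepend z : (exists p x' y' s, y :: w = p ++ x' :: y' :: s /\ redex x' y') ->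
    exists p x' y' s, z :: y :: w = p ++ x' :: y' :: s /\ redex x' y'.
  by case=> p [x' [y' [s [-> r]]]]; exists (z :: p), x', y', s.
case: x hx hl hall => [[]|] //= _ hl hall.
- case: y IH hl hall prepend => [[]|] IH hl hall prepend.
  + by exists [::], Lbar, L1, w.
  + exact/prepend/IH.
  + by exists [::], Lbar, L0, w.
- case: y IH hl hall prepend => [[]|] IH hl hall prepend.
  + by exists [::], L0, L1, w.
  + exact/prepend/IH.
  + exact/prepend/IH.
Qed.

Lemma bracket_rec_gt0 (R : realFieldType) (a b c d e : R) (f : seq letter -> R) :
  0 < a -> 0 < b -> 0 < c -> 0 < d -> 0 < e ->
  bracket_rec a b c d e f -> forall u, 0 < f u.
Proof.
move=> ha hb hc hd he [[ra rb rc rd re] rz] u.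
move: {2}(size u) (leqnn (size u)) => N; elim: N u => [|N IH] u hs.
  by case: u hs => // _; rewrite rz.
have [hz|hz] := boolP (all (pred1 L0) u); first by rewrite rz.
case: u hs hz => [|x v] hs hz; first by rewrite rz.
have [->|hx] := eqVneq x L1; first by rewrite re divr_gt0 // IH.
case/lastP E: (x :: v) => [//|w y].
have hw : (size w <= N)%N by move: hs; rewrite -/(size (x :: v)) E size_rcons.
have [->|hy] := eqVneq y Lbar; first by rewrite rd divr_gt0 // IH.
have hl : last L0 (x :: v) != Lbar by rewrite E last_rcons.
have [p [x' [y' [s [Eu r]]]]] := @exists_redex (x :: v) hx hl hz.
have hsz z : (size (p ++ z :: s) <= N)%N.
  by move: hs; rewrite Eu !size_cat /= !addnS.
rewrite -E Eu; move: r; rewrite /redex.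
case: x' {Eu} => [[]|]; case: y' => [[]|] //= _.
- by rewrite rb divr_gt0 // addr_gt0 // IH.
- by rewrite rc divr_gt0 // IH.
- by rewrite ra divr_gt0 // IH.
Qed.

Section SwapAt.

Variables (T : Type) (x0 : T).

Definition swap_at (s : seq T) (i : nat) :=
  set_nth x0 (set_nth x0 s i (nth x0 s i.+1)) i.+1 (nth x0 s i).

Lemma swap_at_cat p x y s : swap_at (p ++ x :: y :: s) (size p) = p ++ y :: x :: s.
Proof. by elim: p => [|z p IH] //=; rewrite /swap_at /= -/(swap_at _ _) IH. Qed.

Lemma cat_take_nth2_drop s i : (i.+1 < size s)%N ->
  s = take i s ++ nth x0 s i :: nth x0 s i.+1 :: drop i.+2 s.
Proof.
by move=> h; rewrite -(drop_nth x0) // -(drop_nth x0) ?(ltnW h) // cat_take_drop.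
Qed.

Lemma swap_atE s i : (i.+1 < size s)%N ->
  swap_at s i = take i s ++ nth x0 s i.+1 :: nth x0 s i :: drop i.+2 s.
Proof.
move=> h; rewrite {1}(cat_take_nth2_drop h).
by have := swap_at_cat (take i s) (nth x0 s i) (nth x0 s i.+1) (drop i.+2 s);
  rewrite (size_takel (ltnW (ltnW h))).
Qed.

Lemma size_swap_at s i : (i.+1 < size s)%N -> size (swap_at s i) = size s.
Proof. by move=> h; rewrite swap_atE // [in RHS](cat_take_nth2_drop h) !size_cat. Qed.

Lemma count_swap_at (P : pred T) s i : (i.+1 < size s)%N ->
  count P (swap_at s i) = count P s.
Proof.
move=> h; rewrite swap_atE // [in RHS](cat_take_nth2_drop h) !count_cat /=.
by congr (_ + _)%N; rewrite addnCA.
Qed.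

Lemma swap_atK s i : (i.+1 < size s)%N -> swap_at (swap_at s i) i = s.
Proof.
move=> h; rewrite [in swap_at s i]swap_atE //.
by have := swap_at_cat (take i s) (nth x0 s i.+1) (nth x0 s i) (drop i.+2 s);
  rewrite (size_takel (ltnW (ltnW h))) => ->; rewrite -cat_take_nth2_drop.
Qed.

Lemma nth_swap_at_l s i : (i.+1 < size s)%N -> nth x0 (swap_at s i) i = nth x0 s i.+1.
Proof. by move=> h; rewrite swap_atE // nth_cat (size_takel (ltnW (ltnW h))) ltnn subnn. Qed.

Lemma nth_swap_at_r s i : (i.+1 < size s)%N -> nth x0 (swap_at s i) i.+1 = nth x0 s i.
Proof. by move=> h; rewrite swap_atE // nth_cat (size_takel (ltnW (ltnW h))) ltnNge leqnSn subSnn. Qed.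

End SwapAt.

Lemma set_nth_rcons (T : Type) (x0 : T) p x z : set_nth x0 (rcons p x) (size p) z = rcons p z.
Proof. by elim: p => [|y p IH] //=; rewrite IH. Qed.

Section MoveDecomposition.

Variable R : fieldType.
Variables a b c d e : R.

Definition swap_move (u : seq letter) (i : nat) : option (seq letter * R) :=
  omap (fun r => (swap_at L0 u i, r)) (swap_rate a b c (nth L0 u i) (nth L0 u i.+1)).

Definition last_move (u : seq letter) : option (seq letter * R) :=
  if (size u > 0)%N && (last L0 u == Lbar)
  then Some (set_nth L0 u (size u).-1 L1, d) else None.

Definition head_move (u : seq letter) : option (seq letter * R) :=
  if head L0 u == L1 then Some (set_nth L0 u 0 Lbar, e) else None.

Definition opt_rate_to (o : option (seq letter * R)) (v : seq letter) : R :=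
  if o is Some p then (if p.1 == v then p.2 else 0) else 0.

Definition opt_rate (o : option (seq letter * R)) : R :=
  if o is Some p then p.2 else 0.

Lemma movesE u : moves a b c d e u =
  pmap (swap_move u) (iota 0 (size u).-1) ++ seq_of_opt (last_move u)
    ++ seq_of_opt (head_move u).
Proof. by rewrite /moves /last_move /head_move; case: ifP => _; case: ifP. Qed.

Lemma big_seq_of_opt_to o v :
  \sum_(p <- seq_of_opt o | p.1 == v) p.2 = opt_rate_to o v.
Proof. by case: o => [p|]; rewrite /= ?big_nil // big_cons big_nil addr0. Qed.

Lemma big_seq_of_opt o : \sum_(p <- seq_of_opt o) p.2 = opt_rate o.
Proof. by case: o => [p|] /=; rewrite ?big_nil // big_seq1. Qed.

Lemma big_pmap_to (F : nat -> option (seq letter * R)) s v :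
  \sum_(p <- pmap F s | p.1 == v) p.2 = \sum_(i <- s) opt_rate_to (F i) v.
Proof.
elim: s => [|i s IH] /=; first by rewrite !big_nil.
rewrite big_cons -IH; case: (F i) => [p|] /=; last by rewrite add0r.
by rewrite big_cons; case: ifP; rewrite ?add0r.
Qed.

Lemma big_pmap (F : nat -> option (seq letter * R)) s :
  \sum_(p <- pmap F s) p.2 = \sum_(i <- s) opt_rate (F i).
Proof.
elim: s => [|i s IH] /=; first by rewrite !big_nil.
by rewrite big_cons -IH; case: (F i) => [p|] /=; rewrite ?add0r ?big_cons.
Qed.

Lemma rateE u v : rate a b c d e u v =
  \sum_(i <- iota 0 (size u).-1) opt_rate_to (swap_move u i) v
  + opt_rate_to (last_move u) v + opt_rate_to (head_move u) v.
Proof. by rewrite /rate movesE !big_cat /= big_pmap_to !big_seq_of_opt_to addrA. Qed.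

Lemma out_rateE u : out_rate a b c d e u =
  \sum_(i <- iota 0 (size u).-1) opt_rate (swap_move u i)
  + opt_rate (last_move u) + opt_rate (head_move u).
Proof. by rewrite /out_rate movesE !big_cat /= big_pmap !big_seq_of_opt addrA. Qed.

End MoveDecomposition.

(** * Global balance *)

Definition nonzero (x : letter) : bool := x != L0.

Lemma sum_state_space_point (R : fieldType) n t (F : n.-tuple letter -> R)
    (s0 : seq letter) C :
  size s0 = n -> count nonzero s0 = t \/ C = 0 ->
  (forall u : n.-tuple letter, F u = if val u == s0 then C else 0) ->
  \sum_(u : n.-tuple letter | in_state_space t u) F u = C.
Proof.
move=> hs [hc|->] hF; last by rewrite big1 // => u _; rewrite hF; case: ifP.
have hs' : size s0 == n by apply/eqP.
rewrite (bigD1 (Tuple hs')) /=; last by rewrite /in_state_space /= -/nonzero hc.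
by rewrite hF eqxx big1 ?addr0 // => u /andP [_ hu]; rewrite hF ifN.
Qed.

Section Balance.

Variable R : fieldType.
Variables a b c d e : R.
Hypotheses (a0 : a != 0) (b0 : b != 0) (c0 : c != 0) (d0 : d != 0) (e0 : e != 0).
Variable f : seq letter -> R.
Hypothesis hf : bracket_rec a b c d e f.

Definition letter_sign (x : letter) : R :=
  match x with Some true => 1 | Some false => -1 | None => 0 end.

Definition flux (v : seq letter) (k : nat) : R :=
  letter_sign (nth L0 v k) * f (take k v ++ drop k.+1 v).

Definition swap_inflow (v : seq letter) (i : nat) : R :=
  f (swap_at L0 v i) * odflt 0 (swap_rate a b c (nth L0 v i.+1) (nth L0 v i)).

Definition last_inflow (v : seq letter) : R :=
  if last L0 v == L1 then f (set_nth L0 v (size v).-1 Lbar) * d else 0.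

Definition head_inflow (v : seq letter) : R :=
  if head L0 v == Lbar then f (set_nth L0 v 0 L1) * e else 0.

Lemma swap_flow p s x y :
  f (p ++ y :: x :: s) * odflt 0 (swap_rate a b c y x)
  - f (p ++ x :: y :: s) * odflt 0 (swap_rate a b c x y)
  = letter_sign x * f (p ++ y :: s) - letter_sign y * f (p ++ x :: s).
Proof.
case: hf => [[ra rb rc _ _] _].
case: x => [[]|]; case: y => [[]|] /=;
  rewrite ?mulr0 ?subr0 ?mul0r ?mul1r ?sub0r ?subrr // ?ra ?rb ?rc; field_nz.
Qed.

Lemma swap_net_flow v i : (i.+1 < size v)%N ->
  swap_inflow v i - f v * opt_rate (swap_move a b c v i) = flux v i - flux v i.+1.
Proof.
move=> h.
have -> : opt_rate (swap_move a b c v i) =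
    odflt 0 (swap_rate a b c (nth L0 v i) (nth L0 v i.+1)).
  by rewrite /swap_move; case: swap_rate.
rewrite /swap_inflow /flux swap_atE // (drop_nth L0 h) (take_nth L0 (ltnW h)).
by rewrite cat_rcons [in f v](cat_take_nth2_drop L0 h) swap_flow.
Qed.

Lemma last_net_flow v : (0 < size v)%N ->
  last_inflow v - f v * opt_rate (last_move d v) = flux v (size v).-1.
Proof.
case: hf => [[_ _ _ rd _] _]; case/lastP: v => [|p x] // _.
rewrite /last_inflow /last_move /flux !size_rcons /= set_nth_rcons last_rcons.
rewrite nth_rcons ltnn eqxx (drop_oversize (_ : _ <= _)%N) ?size_rcons // cats0.
have -> : take (size p) (rcons p x) = p by rewrite -cats1 take_size_cat.
rewrite set_nth_rcons.
case: x => [[]|] /=; rewrite ?mul0r ?mulr0 ?subr0 ?mul1r ?sub0r ?mulN1r ?rd //; field_nz.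
Qed.

Lemma head_net_flow v : (0 < size v)%N ->
  head_inflow v - f v * opt_rate (head_move e v) = - flux v 0.
Proof.
case: hf => [[_ _ _ _ re] _]; case: v => [|x p] // _.
rewrite /head_inflow /head_move /flux /= drop0.
case: x => [[]|] /=;
  rewrite ?mul0r ?mulr0 ?subr0 ?mul1r ?sub0r ?mulN1r ?oppr0 ?opprK ?re //; field_nz.
Qed.

Lemma last_move_to u v : size u = size v -> (0 < size v)%N ->
  f u * opt_rate_to (last_move d u) v =
  if u == set_nth L0 v (size v).-1 Lbar then last_inflow v else 0.
Proof.
case/lastP: v => [|p x] //; case/lastP: u => [|q y] //; first by rewrite size_rcons.
move=> hs _; rewrite /last_inflow /last_move !size_rcons /= !set_nth_rcons !last_rcons.
rewrite !eqseq_rcons.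
have [->|hy] := eqVneq y Lbar; last by rewrite andbF /= mulr0.
rewrite andbT /= eqseq_rcons; case: eqP => [->|hq] /=; last by rewrite mulr0.
case: (x =P L1) => [->|hx]; rewrite ?mulr0 ?eqxx //.
by rewrite eq_sym (introF eqP hx) mulr0.
Qed.

Lemma head_move_to u v : size u = size v -> (0 < size v)%N ->
  f u * opt_rate_to (head_move e u) v =
  if u == set_nth L0 v 0 L1 then head_inflow v else 0.
Proof.
case: v => [|x p] //; case: u => [|y q] // hs _; rewrite /head_inflow /head_move /=.
rewrite !eqseq_cons.
have [->|hy] := eqVneq y L1; last by rewrite /= mulr0.
rewrite /= eqseq_cons; case: (q =P p) => [->|hq] /=; rewrite ?andbF ?mulr0 //.
case: (x =P Lbar) => [->|hx]; rewrite ?mulr0 ?eqxx ?andbT //.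
by rewrite eq_sym (introF eqP hx) mulr0.
Qed.

Section FixedState.

Variables (n t : nat).
Hypothesis n_gt0 : (0 < n)%N.
Variable v : n.-tuple letter.
Hypothesis v_state : in_state_space t v.

Let size_v : size v = n. Proof. exact: size_tuple. Qed.
Let count_v : count nonzero v = t. Proof. exact/eqP. Qed.

Lemma sum_swap_move_to i : (i.+1 < n)%N ->
  \sum_(u : n.-tuple letter | in_state_space t u) f u * opt_rate_to (swap_move a b c u i) v
  = swap_inflow v i.
Proof.
move=> hn; have h : (i.+1 < size v)%N by rewrite size_v.
apply: (sum_state_space_point (s0 := swap_at L0 v i)); first by rewrite size_swap_at.
  by left; rewrite count_swap_at.
move=> u; have hu : (i.+1 < size u)%N by rewrite size_tuple.
rewrite /swap_inflow /swap_move; case: eqP => [->|hne].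
  rewrite nth_swap_at_l ?nth_swap_at_r ?swap_atK ?size_swap_at //.
  by case: swap_rate => [r|] /=; rewrite ?eqxx ?mulr0.
case: swap_rate => [r|] /=; last by rewrite mulr0.
by case: eqP => [he|]; [case: hne; rewrite -he swap_atK | rewrite mulr0].
Qed.

Lemma sum_last_move_to :
  \sum_(u : n.-tuple letter | in_state_space t u) f u * opt_rate_to (last_move d u) v
  = last_inflow v.
Proof.
have hsv : ((size v).-1 < size v)%N by rewrite prednK ?size_v.
apply: (sum_state_space_point (s0 := set_nth L0 v (size v).-1 Lbar)).
- by rewrite size_set_nth (maxn_idPr hsv).
- rewrite /last_inflow; case: ifP => [hl|]; [left | by right].
  by rewrite count_set_nth_ltn // nth_last (eqP hl) /= -/nonzero count_v addnK.
by move=> u; rewrite last_move_to // !size_tuple.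
Qed.

Lemma sum_head_move_to :
  \sum_(u : n.-tuple letter | in_state_space t u) f u * opt_rate_to (head_move e u) v
  = head_inflow v.
Proof.
have hv0 : (0 < size v)%N by rewrite size_v.
apply: (sum_state_space_point (s0 := set_nth L0 v 0 L1)).
- by rewrite size_set_nth (maxn_idPr hv0).
- rewrite /head_inflow; case: ifP => [hl|]; [left | by right].
  by rewrite count_set_nth_ltn // nth0 (eqP hl) /= -/nonzero count_v addnK.
by move=> u; rewrite head_move_to // !size_tuple.
Qed.

Lemma inflowE :
  \sum_(u : n.-tuple letter | in_state_space t u) f u * rate a b c d e u v
  = \sum_(i <- iota 0 n.-1) swap_inflow v i + last_inflow v + head_inflow v.
Proof.
under eq_bigr => u _ do rewrite rateE size_tuple !mulrDr mulr_sumr.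
rewrite !big_split /= exchange_big /= sum_last_move_to sum_head_move_to.
congr (_ + _ + _); apply: eq_big_seq => i.
by rewrite mem_iota add0n ltn_predRL => /sum_swap_move_to.
Qed.

Lemma bracket_balance :
  \sum_(u : n.-tuple letter | in_state_space t u) f u * rate a b c d e u v
  = f v * out_rate a b c d e v.
Proof.
apply/eqP; rewrite -subr_eq0 inflowE out_rateE size_v !mulrDr mulr_sumr.
have -> : \sum_(i <- iota 0 n.-1) swap_inflow v i + last_inflow v + head_inflow v
    - (\sum_(i <- iota 0 n.-1) f v * opt_rate (swap_move a b c v i)
       + f v * opt_rate (last_move d v) + f v * opt_rate (head_move e v))
  = \sum_(i <- iota 0 n.-1) (swap_inflow v i - f v * opt_rate (swap_move a b c v i))
    + (last_inflow v - f v * opt_rate (last_move d v))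
    + (head_inflow v - f v * opt_rate (head_move e v)).
  by rewrite sumrB; ring.
rewrite last_net_flow ?head_net_flow ?size_v //.
rewrite (eq_big_seq (fun i => flux v i - flux v i.+1)) => [|i]; last first.
  by rewrite mem_iota add0n ltn_predRL => hi; apply: swap_net_flow; rewrite size_v.
have -> : iota 0 n.-1 = index_iota 0 n.-1 by rewrite /index_iota subn0.
under eq_bigr do rewrite -opprB.
by rewrite sumrN telescope_sumr // opprB subrK subrr.
Qed.

End FixedState.

End Balance.

(** * Irreducibility *)

Section Reach.

Variable R : fieldType.
Variables a b c d e : R.

Definition step (u w : seq letter) := exists r, (w, r) \in moves a b c d e u.

Inductive reach : seq letter -> seq letter -> Prop :=
| reach_refl u : reach u u
| reach_step u w v : step u w -> reach w v -> reach u v.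

Lemma reach_trans u w v : reach u w -> reach w v -> reach u v.
Proof. by elim=> // x y z hs _ IH /IH; apply: reach_step. Qed.

Lemma step_reach u w : step u w -> reach u w.
Proof. by move=> h; apply: reach_step h (reach_refl _). Qed.

Lemma step_swap p s x y r : swap_rate a b c x y = Some r ->
  step (p ++ x :: y :: s) (p ++ y :: x :: s).
Proof.
move=> hr; exists r; rewrite movesE mem_cat mem_pmap; apply/orP; left.
apply/mapP; exists (size p).
  by rewrite mem_iota add0n ltn_predRL size_cat /= !addnS ltnS leq_addr.
have hx : nth L0 (p ++ x :: y :: s) (size p) = x by rewrite nth_cat ltnn subnn.
have hy : nth L0 (p ++ x :: y :: s) (size p).+1 = y.
  by rewrite nth_cat ltnNge leqnSn subSnn.
by rewrite /swap_move hx hy hr /= swap_at_cat.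
Qed.

Lemma step_lastbar p : step (rcons p Lbar) (rcons p L1).
Proof.
exists d; rewrite movesE !mem_cat; apply/orP; right; apply/orP; left.
by rewrite /last_move size_rcons last_rcons /= set_nth_rcons mem_seq1.
Qed.

Lemma step_head1 s : step (L1 :: s) (Lbar :: s).
Proof.
exists e; rewrite movesE !mem_cat; apply/orP; right; apply/orP; right.
by rewrite /head_move /= mem_seq1.
Qed.

Lemma reach_bar_right p q s :
  Lbar \notin s -> reach (p ++ Lbar :: s ++ q) (p ++ s ++ Lbar :: q).
Proof.
elim: s p => [|y s IH] p /=; first by move=> _; apply: reach_refl.
rewrite in_cons negb_or => /andP [hy hs].
have [r hr] : exists r, swap_rate a b c Lbar y = Some r.
  by case: y hy => [[]|] //= _; eexists.
apply: reach_step (step_swap p _ hr) _.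
by have := IH (rcons p y) hs; rewrite !cat_rcons.
Qed.

Lemma reach_one_left p q s :
  L1 \notin s -> reach (p ++ s ++ L1 :: q) (p ++ L1 :: s ++ q).
Proof.
elim: s p => [|x s IH] p /=; first by move=> _; apply: reach_refl.
rewrite in_cons negb_or => /andP [hx hs].
have [r hr] : exists r, swap_rate a b c x L1 = Some r.
  by case: x hx => [[]|] //= _; eexists.
apply: reach_trans (_ : reach _ (p ++ x :: L1 :: s ++ q)) _.
  by have := IH (rcons p x) hs; rewrite !cat_rcons.
exact: step_reach (step_swap p _ hr).
Qed.

Lemma reach_zero_right k p q :
  reach (p ++ L0 :: nseq k L1 ++ q) (p ++ nseq k L1 ++ L0 :: q).
Proof.
elim: k p => [|k IH] p /=; first by apply: reach_refl.
apply: reach_step (step_swap p _ (_ : swap_rate a b c L0 L1 = Some a)) _ => //.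
by have := IH (rcons p L1); rewrite !cat_rcons.
Qed.

(* Each 1bar is pushed to the right end and turned into a 1. *)
Lemma reach_barfree u p : exists u', [/\ Lbar \notin u', size u' = size u,
  count nonzero u' = count nonzero u & reach (p ++ u) (p ++ u')].
Proof.
elim: u p => [|x w IH] p; first by exists [::]; split => //; apply: reach_refl.
have [w' [hb hs hc hr]] := IH (rcons p x); rewrite !cat_rcons in hr.
have [hx|hx] := eqVneq x Lbar; last first.
  by exists (x :: w'); split; rewrite /= ?hs ?hc // in_cons negb_or eq_sym hx.
exists (rcons w' L1); split.
- by rewrite mem_rcons in_cons negb_or hb.
- by rewrite size_rcons hs.
- by rewrite -cats1 count_cat hc hx /= addn0 addnC.
apply: reach_trans hr _; rewrite hx.
apply: reach_trans (_ : reach _ (p ++ w' ++ [:: Lbar])) _.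
  by have := reach_bar_right p [::] hb; rewrite cats0.
by rewrite catA cats1 -rcons_cat; apply: step_reach; apply: step_lastbar.
Qed.

Lemma reach_sort z p q : Lbar \notin z ->
  reach (p ++ z ++ q)
        (p ++ nseq (count (pred1 L1) z) L1 ++ nseq (count (pred1 L0) z) L0 ++ q).
Proof.
elim: z p => [|x z IH] p /=; first by move=> _; apply: reach_refl.
rewrite in_cons negb_or => /andP [hx hz].
have := IH (rcons p x) hz; rewrite !cat_rcons => hr.
apply: reach_trans hr _.
case: x hx => [[]|] //= _; rewrite !add0n; [exact: reach_refl | exact: reach_zero_right].
Qed.

Lemma reach_unsort z p q : Lbar \notin z ->
  reach (p ++ nseq (count (pred1 L0) z) L0 ++ nseq (count (pred1 L1) z) L1 ++ q)
        (p ++ z ++ q).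
Proof.
elim: z p => [|x z IH] p /=; first by move=> _; apply: reach_refl.
rewrite in_cons negb_or => /andP [hx hz].
have := IH (rcons p x) hz; rewrite !cat_rcons => hr.
case: x hx hr => [[]|] //= _ hr; rewrite !add0n //.
apply: reach_trans hr.
by apply: reach_one_left; rewrite mem_nseq andbF.
Qed.

(* A leading 1 turns into 1bar, which travels to the right end and turns back. *)
Lemma reach_rotate_ones k z : Lbar \notin z -> reach (nseq k L1 ++ z) (z ++ nseq k L1).
Proof.
elim: k z => [|k IH] z hz /=; first by rewrite cats0; apply: reach_refl.
apply: reach_step (step_head1 _) _.
apply: reach_trans (_ : reach _ ((nseq k L1 ++ z) ++ [:: Lbar])) _.
  have := reach_bar_right [::] [::] (s := nseq k L1 ++ z); rewrite /= cats0; apply.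
  by rewrite mem_cat mem_nseq andbF.
rewrite cats1; apply: reach_step (step_lastbar _) _.
rewrite rcons_cat; have := IH (rcons z L1); rewrite cat_rcons; apply.
by rewrite mem_rcons in_cons.
Qed.

Lemma split_first_bar v : Lbar \in v -> exists p s, v = p ++ Lbar :: s /\ Lbar \notin p.
Proof.
elim: v => [|x v IH] //; rewrite in_cons; have [->|hx] := eqVneq x Lbar.
  by move=> _; exists [::], v.
move=> /= /IH [p [s [-> hp]]]; exists (x :: p), s; split => //.
by rewrite in_cons negb_or eq_sym hx.
Qed.

(* Read backwards: each 1bar of v comes from a 1 in the first position. *)
Lemma reach_from_barfree v : exists z, [/\ Lbar \notin z, size z = size v,
  count nonzero z = count nonzero v & reach z v].
Proof.
move: {2}(count (pred1 Lbar) v) (leqnn (count (pred1 Lbar) v)) => N.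
elim: N v => [|N IH] v hN.
  exists v; split => //; last by apply: reach_refl.
  by rewrite -has_pred1 has_count -leqNgt.
have [hb|hb] := boolP (Lbar \in v); last by exists v; split => //; apply: reach_refl.
have [p [s [hv hp]]] := split_first_bar hb.
have hw : (count (pred1 Lbar) (L1 :: p ++ s) <= N)%N.
  by move: hN; rewrite hv /= !count_cat /= add0n addnS ltnS.
have [z [hz hs hc hr]] := IH _ hw.
exists z; split => //.
- by rewrite hs hv /= !size_cat /= addnS.
- by rewrite hc hv /= !count_cat /= addnS.
apply: reach_trans hr _; rewrite hv.
apply: reach_step (step_head1 _) _.
by have := reach_bar_right [::] s hp.
Qed.

Lemma count_one_barfree z : Lbar \notin z -> count (pred1 L1) z = count nonzero z.
Proof.
elim: z => //= x z IH; rewrite in_cons negb_or => /andP [hx /IH ->].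
by case: x hx => [[]|].
Qed.

Lemma count_zero z : count (pred1 L0) z = (size z - count nonzero z)%N.
Proof.
rewrite -(count_predC nonzero z) addnC addnK.
by apply: eq_count => x; rewrite /nonzero /= negbK.
Qed.

Lemma reach_connected u v :
  size u = size v -> count nonzero u = count nonzero v -> reach u v.
Proof.
move=> hs hc.
have [u' [hu' hsu hcu hru]] := reach_barfree u [::].
have [v' [hv' hsv hcv hrv]] := reach_from_barfree v.
apply: reach_trans hru _; apply: reach_trans _ hrv.
set k := count nonzero u; set m := (size u - k)%N.
apply: (@reach_trans _ (nseq k L1 ++ nseq m L0)).
  have := reach_sort [::] [::] hu'.
  by rewrite /= !cats0 count_one_barfree // count_zero hsu hcu.
have hz : Lbar \notin nseq m L0 by rewrite mem_nseq andbF.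
apply: reach_trans (reach_rotate_ones k hz) _.
have := reach_unsort [::] [::] hv'.
by rewrite /= !cats0 count_one_barfree // count_zero hsv hcv -hs -hc.
Qed.

End Reach.

(** * Uniqueness of the stationary distribution *)

Definition global_balance (R : fieldType) (a b c d e : R) (n t : nat)
    (q : n.-tuple letter -> R) : Prop :=
  forall v, in_state_space t v ->
    \sum_(u | in_state_space t u) q u * rate a b c d e u v = q v * out_rate a b c d e v.

Lemma state_space_witness n t : (t <= n)%N ->
  exists u : n.-tuple letter, in_state_space t u.
Proof.
move=> htn; have hs : size (nseq t L1 ++ nseq (n - t) L0) == n.
  by rewrite size_cat !size_nseq subnKC.
by exists (Tuple hs); rewrite /in_state_space /= count_cat !count_nseq /= mul1n mul0n addn0.
Qed.

Section Stationary.

Variable R : realFieldType.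
Variables a b c d e : R.
Hypotheses (ha : 0 < a) (hb : 0 < b) (hc : 0 < c) (hd : 0 < d) (he : 0 < e).

Lemma move_invariants u w r : (w, r) \in moves a b c d e u ->
  [/\ 0 < r, size w = size u & count nonzero w = count nonzero u].
Proof.
rewrite movesE !mem_cat => /or3P [].
- rewrite mem_pmap => /mapP [i]; rewrite mem_iota add0n ltn_predRL => hi.
  rewrite /swap_move; case hr: swap_rate => [r0|] //= [-> ->].
  rewrite size_swap_at // count_swap_at //; split => //.
  by move: hr; rewrite /swap_rate; repeat case: ifP => _; move=> // [<-].
- rewrite /last_move; case: ifP => // /andP [hs hl]; rewrite mem_seq1 => /eqP [-> ->].
  have hs' : ((size u).-1 < size u)%N by rewrite prednK.
  split => //; first by rewrite size_set_nth (maxn_idPr hs').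
  by rewrite count_set_nth_ltn // nth_last (eqP hl) /= addnK.
- rewrite /head_move; case: ifP => // hl; rewrite mem_seq1 => /eqP [-> ->].
  by case: u hl => [|x u] //= /eqP ->.
Qed.

Lemma rate_ge0 u v : 0 <= rate a b c d e u v.
Proof.
rewrite /rate big_seq_cond; apply: sumr_ge0 => -[w r] /andP [hm _].
by have [/ltW] := move_invariants hm.
Qed.

Lemma step_rate_gt0 u w r : (w, r) \in moves a b c d e u -> 0 < rate a b c d e u w.
Proof.
move=> hm; have [hr _ _] := move_invariants hm.
rewrite /rate (big_rem (w, r)) //= eqxx ltr_wpDr //.
rewrite big_seq_cond; apply: sumr_ge0 => -[w' r'] /andP [hm' _].
by have [/ltW] := move_invariants (mem_rem hm').
Qed.

Section StateSpace.

Variables (n t : nat).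
Implicit Types (u v w : n.-tuple letter) (q : n.-tuple letter -> R).

Lemma step_state_space u (w : seq letter) : in_state_space t u -> step a b c d e u w ->
  exists2 w' : n.-tuple letter, val w' = w & in_state_space t w' /\ 0 < rate a b c d e u w'.
Proof.
move=> hu [r hm]; have [_ hsz hcn] := move_invariants hm.
have hw : size w == n by rewrite hsz size_tuple.
exists (Tuple hw) => //; split; last exact: step_rate_gt0 hm.
by rewrite /in_state_space /= -/nonzero hcn.
Qed.

(* The inflow into v is a sum of nonnegative terms. *)
Lemma balance_eq0_step q u v :
  (forall w, in_state_space t w -> 0 <= q w) -> global_balance a b c d e t q ->
  in_state_space t u -> in_state_space t v -> 0 < rate a b c d e u v ->
  q v = 0 -> q u = 0.
Proof.
move=> q_ge0 q_bal hu hv huv qv0.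
have flow_ge0 w : in_state_space t w -> 0 <= q w * rate a b c d e w v.
  by move=> hw; rewrite mulr_ge0 ?q_ge0 ?rate_ge0.
have inflow0 : \sum_(w | in_state_space t w) q w * rate a b c d e w v = 0.
  by rewrite q_bal // qv0 mul0r.
by move/eqP: (psumr_eq0P flow_ge0 inflow0 hu); rewrite mulf_eq0 (gt_eqF huv) orbF => /eqP.
Qed.

Lemma balance_eq0 q u v :
  (forall w, in_state_space t w -> 0 <= q w) -> global_balance a b c d e t q ->
  in_state_space t u -> in_state_space t v -> q v = 0 -> q u = 0.
Proof.
move=> q_ge0 q_bal hu hv qv0.
suff reach_eq0 x y : reach a b c d e x y ->
    (forall w, val w = y -> in_state_space t w -> q w = 0) ->
    forall w, val w = x -> in_state_space t w -> q w = 0.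
  apply: (reach_eq0 u v) => // [|w /val_inj -> //].
  by apply: reach_connected; rewrite ?size_tuple // /nonzero (eqP hu) (eqP hv).
elim=> [z|x1 w z hs _ IH] hz u' hx hu'; first exact: hz.
rewrite -hx in hs; have [w' hw' [hw's huw']] := step_state_space hu' hs.
exact: balance_eq0_step hu' hw's huw' (IH hz w' hw' hw's).
Qed.

Lemma stationary_eq_bracket f (pi : n.-tuple letter -> R) :
  bracket_rec a b c d e f -> (0 < n)%N -> stationary a b c d e t pi ->
  forall u, in_state_space t u ->
  pi u = f u / \sum_(w : n.-tuple letter | in_state_space t w) f w.
Proof.
move=> hf hn [pi_ge0 pi_sum pi_bal] u0 hu0.
have f_gt0 := bracket_rec_gt0 ha hb hc hd he hf.
have [um hum um_min] := arg_minP (fun w => pi w / f w) hu0.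
set m := pi um / f um.
pose q w := pi w - m * f w.
have q_ge0 w : in_state_space t w -> 0 <= q w.
  by move=> hw; rewrite subr_ge0 -ler_pdivlMr // um_min.
have q_bal : global_balance a b c d e t q.
  move=> v hv; under eq_bigr do rewrite mulrBl -mulrA.
  rewrite sumrB -mulr_sumr pi_bal // (bracket_balance _ _ _ _ _ hf hn hv) ?gt_eqF //.
  by rewrite mulrBl mulrA.
have pi_prop w : in_state_space t w -> pi w = m * f w.
  move=> hw; apply/eqP; rewrite -subr_eq0; apply/eqP.
  by apply: (balance_eq0 q_ge0 q_bal hw hum); rewrite /q /m divfK ?subrr ?gt_eqF.
have sum_gt0 : 0 < \sum_(w : n.-tuple letter | in_state_space t w) f w.
  by rewrite (bigD1 u0) //= ltr_wpDr ?f_gt0 // sumr_ge0 // => w _; apply: ltW.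
rewrite pi_prop // mulrC; congr (_ * _); apply: (mulIf (lt0r_neq0 sum_gt0)).
by rewrite mulVf ?gt_eqF // mulrC -pi_sum mulr_suml; apply: eq_bigr => w /pi_prop ->; rewrite mulrC.
Qed.

Lemma bracket_stationary f (pi : n.-tuple letter -> R) :
  bracket_rec a b c d e f -> (0 < n)%N -> (t <= n)%N ->
  (forall u, in_state_space t u ->
     pi u = f u / \sum_(w : n.-tuple letter | in_state_space t w) f w) ->
  stationary a b c d e t pi.
Proof.
move=> hf hn htn pi_def.
have f_gt0 := bracket_rec_gt0 ha hb hc hd he hf.
set S := \sum_(w : n.-tuple letter | in_state_space t w) f w.
have [u0 hu0] := state_space_witness htn.
have S_gt0 : 0 < S.
  by rewrite /S (bigD1 u0) //= ltr_wpDr ?f_gt0 // sumr_ge0 // => w _; apply: ltW.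
split.
- by move=> u hu; rewrite pi_def // divr_ge0 // ltW.
- rewrite (eq_bigr (fun u => f u / S)) => [|u /pi_def //].
  by rewrite -mulr_suml divff ?gt_eqF.
- move=> v hv; rewrite (eq_bigr (fun u => f u * rate a b c d e u v / S)) => [|u hu].
    rewrite -mulr_suml (bracket_balance _ _ _ _ _ hf hn hv) ?gt_eqF //.
    by rewrite pi_def // mulrAC.
  by rewrite pi_def // mulrAC.
Qed.

End StateSpace.

End Stationary.

Theorem theorem2 (n t : nat) (R : realFieldType) (a b c d e : R) :
  (2 <= n)%N -> (1 <= t)%N -> (t <= n - 1)%N ->
  0 < a -> 0 < b -> 0 < c -> 0 < d -> 0 < e ->
  (exists f : seq letter -> R, bracket_rec a b c d e f) /\
  (forall f : seq letter -> R, bracket_rec a b c d e f ->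
     forall pi : n.-tuple letter -> R,
       stationary a b c d e t pi <->
       (forall u : n.-tuple letter, in_state_space t u ->
          pi u = f u / \sum_(w : n.-tuple letter | in_state_space t w) f w)).
Proof.
move=> hn _ htn ha hb hc hd he; split.
  by exists (bracket a b c d e); apply: bracket_recP; apply: lt0r_neq0.
have n_gt0 : (0 < n)%N by apply: leq_trans hn.
have t_le_n : (t <= n)%N by apply: leq_trans htn (leq_subr _ _).
move=> f hf pi; split.
- exact: stationary_eq_bracket.
- exact: bracket_stationary.
Qed.
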